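(* Let $n\ge 3$. The cycle $C_n$ admits an $(a,d)$-distance antimagic labeling for some integers $a$ and $d\ge 0$ if and only if either $d=0$ and $n=4$, or $d=1$ and $n$ is odd.
   Context: For a finite simple graph $G=(V,E)$ with $v=|V|$ vertices and a bijection $f:V\to\{1,\dots,v\}$, the vertex-weight of $x$ is $w(x)=\sum_{y\in N(x)} f(y)$, where $N(x)$ is the set of neighbours of $x$. For integers $a$ and $d\ge 0$, $f$ is an $(a,d)$-distance antimagic labeling if the multiset of vertex-weights equals $\{a,a+d,\dots,a+(v-1)d\}$. *)

From mathcomp Require Import all_boot all_order all_algebra.
Set Implicit Arguments. Unset Strict Implicit. Unset Printing Implicit Defensive.
Import GRing.Theory Num.Theory.

(* A finite simple graph is a symmetric irreflexive relation e on a finType T.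
   A labeling is f : T -> 'I_#|T|; the actual label of x is (f x).+1, so that
   labels range over {1, ..., |V|}. *)

Definition vweight (T : finType) (e : rel T) (f : T -> 'I_#|T|) (x : T) : nat :=
  \sum_(y | e x y) (f y).+1.

Definition distance_antimagic (T : finType) (e : rel T) (f : T -> 'I_#|T|)
    (a : int) (d : nat) : Prop :=
  bijective f /\
  perm_eq [seq ((vweight e f x)%:Z)%R | x <- enum T]
          [seq (a + (i * d)%:Z)%R | i <- iota 0 #|T|].

Definition cycle_rel (n : nat) : rel 'I_n :=
  fun i j => (val j == (val i).+1 %% n) || (val i == (val j).+1 %% n).

From mathcomp Require Import all_boot all_order all_algebra zify.
Set Implicit Arguments. Unset Strict Implicit. Unset Printing Implicit Defensive.

(* Necessity.  Two distinct labels of {1..n} sum to a value in [3, 2n-1], so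
   the n - 1 steps of the progression fit in that window and d <= 1.  If d = 0,
   the neighbours ordS x and ord_pred x of any x have equal weight, which forces
   ordS (ordS x) = ord_pred (ord_pred x), i.e. n divides 4, so n = 4.  If
   d = 1, each label is counted twice in the total weight, so
   2(1 + ... + n) = nA + (0 + ... + (n-1)); hence n + 3 = 2A and n is odd.

   Sufficiency.  For n = 4 the labels 1, 2, 4, 3 give every vertex weight 5.
   For n = 2K+1, let halve be multiplication by 1/2 on Z/nZ.  It maps the two
   neighbours of x to consecutive residues q, q+1, and halves of consecutive
   residues satisfy halve q + halve (q+1) = K + (q+1 mod n).  Labeling x by
   halve (halve x) + 1 therefore gives x the weight K + 2 + halve (x+1), and
   these weights run through K+2, ..., 3K+2 exactly once. *)

Lemma perm_enum_bij (T U : finType) (g : T -> U) :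
  bijective g -> perm_eq [seq g x | x <- enum T] (enum U).
Proof.
move=> gbij; have [g' _ g'K] := gbij.
apply: uniq_perm; first by rewrite map_inj_uniq ?enum_uniq //; exact: bij_inj.
  exact: enum_uniq.
move=> u; rewrite mem_enum; apply/mapP; exists (g' u); by rewrite ?mem_enum ?g'K.
Qed.

Lemma double_triangular_sum N : (\sum_(0 <= i < N) i).*2 = N * N.-1.
Proof.
elim: N => [|N IH]; first by rewrite big_geq.
by rewrite big_nat_recr //= doubleD IH; case: N {IH} => //= N; lia.
Qed.

Section Antimagic.
Variables (T : finType) (e : rel T) (f : T -> 'I_#|T|).

(* When the vertex set is nonempty the first term a of the progression is a
   weight, hence a natural number, and the condition can be read over nat. *)
Lemma antimagic_nat (a : int) (d : nat) : 0 < #|T| -> distance_antimagic e f a d ->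
  exists2 A : nat, a = A &
    perm_eq [seq vweight e f x | x <- enum T] [seq A + i * d | i <- iota 0 #|T|].
Proof.
move=> T_gt0 [_ hw]; set w := vweight e f in hw *.
have /mapP[x0 _ a_w] : a \in [seq Posz (w x) | x <- enum T].
  by rewrite (perm_mem hw); apply/mapP; exists 0; rewrite ?mem_iota ?GRing.addr0.
exists (w x0) => //; apply: (@perm_map_inj _ _ Posz) => [m k [] //|].
by rewrite -!(map_comp Posz); move: hw; rewrite a_w.
Qed.

Lemma antimagic_of_weights (A d : nat) (g : T -> 'I_#|T|) :
  bijective f -> bijective g -> (forall x, vweight e f x = A + g x * d) ->
  distance_antimagic e f A d.
Proof.
move=> fbij gbij hw; split=> //.
pose F i := Posz (A + i * d).
have -> : [seq Posz (vweight e f x) | x <- enum T] = map F (map val (map g (enum T))).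
  by rewrite -(map_comp F val) -(map_comp (F \o val)); apply: eq_map => x /=; rewrite hw.
rewrite -val_enum_ord; exact/perm_map/perm_map/perm_enum_bij.
Qed.

Lemma sum_labels : bijective f -> \sum_x (f x).+1 = \sum_(0 <= i < #|T|) i + #|T|.
Proof.
move=> fbij; have -> : \sum_x (f x).+1 = \sum_(i < #|T|) i.+1.
  by rewrite [RHS](reindex f) //; exact: onW_bij.
rewrite -(big_mkord xpredT S) (eq_bigr (fun i => i + 1)) => [|i _]; last by rewrite addn1.
by rewrite big_split sum_nat_const_nat subn0 muln1.
Qed.

Section Progression.
Variables (A d : nat).
Hypothesis hw :
  perm_eq [seq vweight e f x | x <- enum T] [seq A + i * d | i <- iota 0 #|T|].

Lemma weight_attained i : i < #|T| -> exists x, vweight e f x = A + i * d.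
Proof.
move=> lt_i; have : A + i * d \in [seq vweight e f x | x <- enum T].
  by rewrite (perm_mem hw) (map_f (fun i => A + i * d)) // mem_iota.
by case/mapP=> x _ ->; exists x.
Qed.

Lemma weight_in_progression x : exists2 i, i < #|T| & vweight e f x = A + i * d.
Proof.
have : vweight e f x \in [seq A + i * d | i <- iota 0 #|T|].
  by rewrite -(perm_mem hw) (map_f (vweight e f)) ?mem_enum.
by case/mapP=> i; rewrite mem_iota => /andP[_ lt_i] ->; exists i.
Qed.

Lemma sum_weights : \sum_x vweight e f x = #|T| * A + (\sum_(0 <= i < #|T|) i) * d.
Proof.
rewrite -big_enum -(big_map _ xpredT id) (perm_big _ hw) big_map.
have -> : iota 0 #|T| = index_iota 0 #|T| by rewrite /index_iota subn0.
by rewrite big_split sum_nat_const_nat subn0 mulnC big_distrl.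
Qed.
End Progression.
End Antimagic.

Section Cycle.
Variable n : nat.

Lemma cycle_relE (i j : 'I_n) : cycle_rel i j = (j == ordS i) || (j == ord_pred i).
Proof.
rewrite /cycle_rel; congr (_ || _).
have -> : (val i == j.+1 %% n) = (i == ordS j) by [].
by rewrite -(can_eq (@ord_predK n)) ordSK eq_sym.
Qed.

Lemma iter_ordS_val k (x : 'I_n) : iter k (@ordS n) x = (x + k) %% n :> nat.
Proof.
elim: k => [|k IH] /=; first by rewrite addn0 modn_small.
by rewrite IH -addn1 modnDml -addnA addn1.
Qed.

Lemma iter_ordS_fixed k (x : 'I_n) : iter k (@ordS n) x = x -> n %| k.
Proof.
move/(congr1 (@nat_of_ord n)); rewrite iter_ordS_val -{2}(modn_small (ltn_ord x)) => /eqP.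
by rewrite -{2}[nat_of_ord x]addn0 eqn_modDl mod0n.
Qed.

Hypothesis n_ge3 : 3 <= n.

Lemma ordS_neq_ord_pred (x : 'I_n) : ordS x != ord_pred x.
Proof.
apply/eqP=> /(congr1 (@ordS n)); rewrite ord_predK.
by move=> /(@iter_ordS_fixed 2)/(dvdn_leq (isT : 0 < 2))/(leq_trans n_ge3).
Qed.

Variable f : 'I_n -> 'I_#|'I_n|.
Local Notation w := (vweight (@cycle_rel n) f).

Lemma vweight_cycle x : w x = (f (ordS x)).+1 + (f (ord_pred x)).+1.
Proof.
rewrite /vweight (bigD1 (ordS x)) ?cycle_relE ?eqxx //= (big_pred1 (ord_pred x)) // => y.
rewrite /= cycle_relE; have [->|_] := eqVneq y (ord_pred x).
  by rewrite orbT eq_sym ordS_neq_ord_pred.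
by rewrite orbF andbN.
Qed.

Lemma sum_vweight_cycle : \sum_x w x = (\sum_x (f x).+1).*2.
Proof.
rewrite (eq_bigr _ (fun x _ => vweight_cycle x)) big_split -addnn.
congr (_ + _); first by rewrite [RHS](reindex_inj (@ordS_inj n)).
by rewrite [RHS](reindex_inj (@ord_pred_inj n)).
Qed.

Hypothesis f_inj : injective f.

Lemma vweight_cycle_bounds x : 3 <= w x < n.*2.
Proof.
have f_lt y : f y < n by rewrite -[n in _ < n]card_ord.
have : (f (ordS x) : nat) != f (ord_pred x).
  by rewrite (inj_eq val_inj) (inj_eq f_inj) ordS_neq_ord_pred.
by rewrite vweight_cycle; have := f_lt (ordS x); have := f_lt (ord_pred x); lia.
Qed.

(* The two neighbours of x share x, so equal weights force their other
   neighbours to carry equal labels, i.e. to coincide; this happens only in C_4. *)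
Lemma equal_neighbour_weights x : w (ordS x) = w (ord_pred x) -> n = 4.
Proof.
rewrite !vweight_cycle ordSK ord_predK addnC => /addnI/succn_inj/val_inj/f_inj.
move=> /(congr1 (@ordS n \o @ordS n)) /=.
rewrite !ord_predK => /(@iter_ordS_fixed 4) n_dvd4.
have le_n4 : n <= 4 := dvdn_leq (isT : 0 < 4) n_dvd4.
have [n3|//] : n = 3 \/ n = 4 by lia.
by rewrite n3 in n_dvd4.
Qed.

Variables (A d : nat).
Hypothesis hw :
  perm_eq [seq w x | x <- enum 'I_n] [seq A + i * d | i <- iota 0 #|'I_n|].

(* The progression fits into [3, 2n-1], so its step is at most 1. *)
Lemma cycle_step_le1 : d <= 1.
Proof.
have first_lt : 0 < #|'I_n| by rewrite card_ord; lia.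
have last_lt : n.-1 < #|'I_n| by rewrite card_ord; lia.
have [x wx] := weight_attained hw first_lt; have [y wy] := weight_attained hw last_lt.
have := vweight_cycle_bounds x; have := vweight_cycle_bounds y.
rewrite wx wy; nia.
Qed.

Lemma cycle_step0 : d = 0 -> n = 4.
Proof.
move=> d0; pose x : 'I_n := Ordinal (ltn_trans (isT : 0 < 2) n_ge3).
apply: (equal_neighbour_weights (x := x)).
have [i _ ->] := weight_in_progression hw (ordS x).
by have [j _ ->] := weight_in_progression hw (ord_pred x); rewrite d0 !muln0.
Qed.

(* With step 1, counting the total weight in two ways gives n + 3 = 2A. *)
Lemma cycle_step1 : d = 1 -> odd n.
Proof.
move=> d1; have f_bij : bijective f by apply: inj_card_bij; rewrite ?card_ord.
have := sum_weights hw; rewrite sum_vweight_cycle (sum_labels f_bij) card_ord d1.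
have := double_triangular_sum n; set S := \sum_(0 <= i < n) i => S2 sum_eq.
have /eqP : n * (n.-1 + 4) = n * A.*2 by nia.
rewrite eqn_pmul2l; [move=> /eqP; lia | lia].
Qed.
End Cycle.

Definition ord_label n (i : 'I_n) : 'I_#|'I_n| := cast_ord (esym (card_ord n)) i.

Lemma ord_labelE n (i : 'I_n) : ord_label i = i :> nat.
Proof. by []. Qed.

Lemma ord_label_bij n : bijective (@ord_label n).
Proof. exact: (Bijective (cast_ordK _) (cast_ordKV _)). Qed.

Definition c4_label (x : 'I_4) : 'I_4 := inord (nth 0 [:: 0; 1; 3; 2] x).

Lemma c4_labelE x : c4_label x = nth 0 [:: 0; 1; 3; 2] x :> nat.
Proof. by rewrite inordK //; case: x => [[|[|[|[|]]]]]. Qed.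

Lemma c4_label_inj : injective c4_label.
Proof.
move=> x y /(congr1 val); rewrite /= !c4_labelE => eq_xy; apply: val_inj.
by move: eq_xy; case: x => [[|[|[|[|]]]] ?]; case: y => [[|[|[|[|]]]] ?].
Qed.

Lemma c4_label_weight x : (c4_label (ordS x)).+1 + (c4_label (ord_pred x)).+1 = 5.
Proof. by rewrite !c4_labelE; case: x => [[|[|[|[|]]]] ?]. Qed.

Lemma cycle4_antimagic :
  exists (f : 'I_4 -> 'I_#|'I_4|) (a : int), distance_antimagic (@cycle_rel 4) f a 0.
Proof.
pose f x := ord_label (c4_label x).
have f_bij : bijective f.
  exact: bij_comp (ord_label_bij 4) (injF_bij c4_label_inj).
exists f, (Posz 5); apply: (antimagic_of_weights f_bij f_bij) => x.
by rewrite muln0 addn0 vweight_cycle // !ord_labelE c4_label_weight.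
Qed.

Lemma ordS_val n (i : 'I_n) : ordS i = (if i.+1 == n then 0 else i.+1) :> nat.
Proof.
rewrite /=; case: eqP => [->|ne]; first by rewrite modnn.
by rewrite modn_small //; have := ltn_ord i; lia.
Qed.

Lemma ord_pred_val n (i : 'I_n) :
  ord_pred i = (if i == 0 :> nat then n.-1 else i.-1) :> nat.
Proof.
have lt_i := ltn_ord i; rewrite /=; case: eqP => [->|ne].
  by rewrite add0n modn_small //; lia.
by rewrite -subn1 -addnBAC ?modnDr ?modn_small ?subn1; lia.
Qed.

Section OddCycle.
Variable K : nat.
Local Notation N := K.*2.+1.

(* For x < 2K+1, half_mod x is the residue y < 2K+1 with 2y = x mod 2K+1. *)
Definition half_mod (x : nat) : nat := if odd x then x./2 + K.+1 else x./2.

Lemma half_mod_lt x : x < N -> half_mod x < N.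
Proof. by rewrite /half_mod; case: ifP; lia. Qed.

Definition halve (x : 'I_N) : 'I_N := Ordinal (half_mod_lt (ltn_ord x)).

Lemma halveE x : halve x = half_mod x :> nat.
Proof. by []. Qed.

Lemma halve_inj : injective halve.
Proof.
move=> x y /(congr1 val) /=; rewrite /half_mod => eq_h; apply: val_inj => /=.
by have := ltn_ord x; have := ltn_ord y; move: eq_h; do 2 case: ifP; lia.
Qed.

Lemma halve_add_ordS q : halve q + halve (ordS q) = K + ordS q.
Proof.
rewrite !halveE ordS_val /half_mod; have := ltn_ord q.
by case: eqP => ? /=; do ? (case: ifP => /= ?); lia.
Qed.

(* Halving maps the two neighbours of v to consecutive residues. *)
Lemma halve_ordS v : halve (ordS v) = ordS (halve (ord_pred v)).
Proof.
apply: ord_inj; rewrite halveE !ordS_val halveE ord_pred_val /half_mod.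
by have := ltn_ord v; do ? case: ifP; lia.
Qed.

Hypothesis K_gt0 : 0 < K.

Definition odd_label (x : 'I_N) : 'I_#|'I_N| := ord_label (halve (halve x)).

Lemma odd_label_weight x : vweight (@cycle_rel N) odd_label x = K.+2 + halve (ordS x).
Proof.
rewrite vweight_cycle; last lia.
by rewrite !ord_labelE halve_ordS; have := halve_add_ordS (halve (ord_pred x)); lia.
Qed.

Lemma odd_cycle_antimagic :
  exists (f : 'I_N -> 'I_#|'I_N|) (a : int), distance_antimagic (@cycle_rel N) f a 1.
Proof.
have halve_bij : bijective halve := injF_bij halve_inj.
have label_bij : bijective odd_label.
  exact: bij_comp (ord_label_bij N) (bij_comp halve_bij halve_bij).
have rank_bij : bijective (fun x => ord_label (halve (ordS x))).
  exact: bij_comp (ord_label_bij N) (bij_comp halve_bij (@ordS_bij N)).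
exists odd_label, (Posz K.+2); apply: (antimagic_of_weights label_bij rank_bij) => x.
by rewrite odd_label_weight ord_labelE muln1.
Qed.
End OddCycle.

Theorem theorem5 (n : nat) (d : nat) (hn : 3 <= n) :
  (exists (f : 'I_n -> 'I_#|'I_n|) (a : int), distance_antimagic (@cycle_rel n) f a d)
  <-> ((d = 0 /\ n = 4) \/ (d = 1 /\ odd n)).
Proof.
split=> [[f [a hf]]|].
- have n_pos : 0 < #|'I_n| by rewrite card_ord; lia.
  have [A _ hw] := antimagic_nat n_pos hf.
  have f_inj : injective f := bij_inj (proj1 hf).
  have := cycle_step_le1 hn f_inj hw.
  case: d hf hw => [|[|d]] _ hw d_le1 //.
    by left; split => //; exact: (cycle_step0 hn f_inj hw).
  by right; split => //; exact: (cycle_step1 hn f_inj hw).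
- case=> [[-> ->]|[-> odd_n]]; first exact: cycle4_antimagic.
  have [K n_eq] : exists K, n = K.*2.+1 by exists n./2; lia.
  by move: hn; rewrite n_eq => hK; apply: odd_cycle_antimagic; lia.
Qed.
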